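(* Let $R$ be one of the chain rings $\mathbb{G}_4=\mathbb{Z}_4[X]/(X^2+X+1)$, $\mathbb{S}_4=\mathbb{F}_4[X]/(X^2)$, $\mathbb{T}_4=\mathbb{F}_4[X;a\mapsto a^2]/(X^2)$. Then there exist projective arcs with parameters $(120,8)$, $(140,9)$ and $(152,10)$ in $\mathrm{PHG}(2,R)$.
   Context: $\mathbb{F}_4[X;a\mapsto a^2]$ denotes the skew polynomial ring with commutation rule $Xa=a^2X$. For a finite chain ring $R$ of length $2$ with residue field $\mathbb{F}_q$, the projective Hjelmslev plane $\mathrm{PHG}(2,R)$ is the incidence structure whose points are the free rank-$1$ submodules of the right module $R_R^3$, whose lines are the free rank-$2$ submodules of $R_R^3$, with incidence given by inclusion. A projective $(k,n)$-arc is a set of $k$ points meeting every line in at most $n$ points. *)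

From HB Require Import structures.
From mathcomp Require Import all_boot all_order all_algebra.
From mathcomp Require Import ring.

Set Implicit Arguments.
Unset Strict Implicit.
Unset Printing Implicit Defensive.

Import GRing.Theory.
Local Open Scope ring_scope.

(* An element (a, b) stands for a + b*xi, where xi^2 = -xi - 1.        *)
Definition G4 : Type := ('Z_4 * 'Z_4)%type.
HB.instance Definition _ := Finite.on G4.
HB.instance Definition _ := GRing.Zmodule.on G4.

Definition G4_one : G4 := (1, 0).
Definition G4_mul (x y : G4) : G4 :=
  (x.1 * y.1 - x.2 * y.2, x.1 * y.2 + x.2 * y.1 - x.2 * y.2).

Lemma G4_mulA : associative G4_mul.
Proof. by move=> [a b] [c d] [e f]; rewrite /G4_mul; apply: injective_projections => /=; ring. Qed.
Lemma G4_mul1r : left_id G4_one G4_mul.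
Proof. by move=> [a b]; rewrite /G4_mul; apply: injective_projections => /=; ring. Qed.
Lemma G4_mulr1 : right_id G4_one G4_mul.
Proof. by move=> [a b]; rewrite /G4_mul; apply: injective_projections => /=; ring. Qed.
Lemma G4_mulDl : left_distributive G4_mul +%R.
Proof. by move=> [a b] [c d] [e f]; rewrite /G4_mul; apply: injective_projections => /=; ring. Qed.
Lemma G4_mulDr : right_distributive G4_mul +%R.
Proof. by move=> [a b] [c d] [e f]; rewrite /G4_mul; apply: injective_projections => /=; ring. Qed.
Lemma G4_one_neq0 : G4_one != 0.
Proof. by []. Qed.

HB.instance Definition _ := GRing.Zmodule_isNzRing.Build G4
  G4_mulA G4_mul1r G4_mulr1 G4_mulDl G4_mulDr G4_one_neq0.

(* The field F4 = F_2[X]/(X^2+X+1): (a, b) stands for a + b*w,         *)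
(* w^2 = w + 1.                                                        *)
Definition F4 : Type := ('F_2 * 'F_2)%type.
HB.instance Definition _ := Finite.on F4.
HB.instance Definition _ := GRing.Zmodule.on F4.

Definition F4_one : F4 := (1, 0).
Definition F4_mul (x y : F4) : F4 :=
  (x.1 * y.1 + x.2 * y.2, x.1 * y.2 + x.2 * y.1 + x.2 * y.2).

Lemma F4_mulA : associative F4_mul.
Proof. by move=> [a b] [c d] [e f]; rewrite /F4_mul; apply: injective_projections => /=; ring. Qed.
Lemma F4_mulC : commutative F4_mul.
Proof. by move=> [a b] [c d]; rewrite /F4_mul; apply: injective_projections => /=; ring. Qed.
Lemma F4_mul1r : left_id F4_one F4_mul.
Proof. by move=> [a b]; rewrite /F4_mul; apply: injective_projections => /=; ring. Qed.
Lemma F4_mulDl : left_distributive F4_mul +%R.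
Proof. by move=> [a b] [c d] [e f]; rewrite /F4_mul; apply: injective_projections => /=; ring. Qed.
Lemma F4_one_neq0 : F4_one != 0.
Proof. by []. Qed.

HB.instance Definition _ := GRing.Zmodule_isComNzRing.Build F4
  F4_mulA F4_mulC F4_mul1r F4_mulDl F4_one_neq0.

Lemma F4_char2 : (1 + 1 : F4) = 0.
Proof. by apply/eqP. Qed.

Lemma F4_sqrD (c e : F4) : (c + e) * (c + e) = c * c + e * e.
Proof.
have h : c * e + c * e = 0.
  by rewrite -mulr2n -mulr_natl mulr2n F4_char2 mul0r.
by transitivity (c * c + e * e + (c * e + c * e)); [ring | rewrite h addr0].
Qed.

(* S4 = F4[X]/(X^2): (a, b) stands for a + b X, X central.             *)
Definition S4 : Type := (F4 * F4)%type.
HB.instance Definition _ := Finite.on S4.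
HB.instance Definition _ := GRing.Zmodule.on S4.

Definition S4_one : S4 := (1, 0).
Definition S4_mul (x y : S4) : S4 := (x.1 * y.1, x.1 * y.2 + x.2 * y.1).

Lemma S4_mulA : associative S4_mul.
Proof. by move=> [a b] [c d] [e f]; rewrite /S4_mul; apply: injective_projections => /=; ring. Qed.
Lemma S4_mulC : commutative S4_mul.
Proof. by move=> [a b] [c d]; rewrite /S4_mul; apply: injective_projections => /=; ring. Qed.
Lemma S4_mul1r : left_id S4_one S4_mul.
Proof. by move=> [a b]; rewrite /S4_mul; apply: injective_projections => /=; ring. Qed.
Lemma S4_mulDl : left_distributive S4_mul +%R.
Proof. by move=> [a b] [c d] [e f]; rewrite /S4_mul; apply: injective_projections => /=; ring. Qed.
Lemma S4_one_neq0 : S4_one != 0.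
Proof. by apply/eqP => -[/eqP]; rewrite oner_eq0. Qed.

HB.instance Definition _ := GRing.Zmodule_isComNzRing.Build S4
  S4_mulA S4_mulC S4_mul1r S4_mulDl S4_one_neq0.

(* T4 = F4[X; a |-> a^2]/(X^2): (a, b) stands for a + b X, with the    *)
(* commutation rule X a = a^2 X, hence                                 *)
(*   (a + b X)(c + d X) = a c + (a d + b c^2) X.                       *)
Definition T4 : Type := (F4 * F4)%type.
HB.instance Definition _ := Finite.on T4.
HB.instance Definition _ := GRing.Zmodule.on T4.

Definition T4_one : T4 := (1, 0).
Definition T4_mul (x y : T4) : T4 :=
  (x.1 * y.1, x.1 * y.2 + x.2 * (y.1 ^+ 2)).

Lemma T4_mulA : associative T4_mul.
Proof. by move=> [a b] [c d] [e f]; rewrite /T4_mul; apply: injective_projections => /=; ring. Qed.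
Lemma T4_mul1r : left_id T4_one T4_mul.
Proof. by move=> [a b]; rewrite /T4_mul; apply: injective_projections => /=; ring. Qed.
Lemma T4_mulr1 : right_id T4_one T4_mul.
Proof. by move=> [a b]; rewrite /T4_mul; apply: injective_projections => /=; ring. Qed.
Lemma T4_mulDl : left_distributive T4_mul +%R.
Proof. by move=> [a b] [c d] [e f]; rewrite /T4_mul; apply: injective_projections => /=; ring. Qed.
Lemma T4_mulDr : right_distributive T4_mul +%R.
Proof.
move=> [a b] [c d] [e f]; rewrite /T4_mul; apply: injective_projections => /=.
  by ring.
by rewrite !expr2 F4_sqrD; ring.
Qed.
Lemma T4_one_neq0 : T4_one != 0.
Proof. by apply/eqP => -[/eqP]; rewrite oner_eq0. Qed.

HB.instance Definition _ := GRing.Zmodule_isNzRing.Build T4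
  T4_mulA T4_mul1r T4_mulr1 T4_mulDl T4_mulDr T4_one_neq0.

(* Vectors of R^3 are row vectors; R^3 is a RIGHT R-module, the scalar *)
(* acting by right multiplication on each coordinate.                   *)
Section PHG.
Variable R : finNzRingType.

Definition rscale (x : 'rV[R]_3) (r : R) : 'rV[R]_3 := \row_i (x 0 i * r).

Definition lincomb1 (x : 'rV[R]_3) (r : R) : 'rV[R]_3 := rscale x r.
Definition lincomb2 (x y : 'rV[R]_3) (rs : R * R) : 'rV[R]_3 :=
  rscale x rs.1 + rscale y rs.2.

(* S is a free rank-1 submodule of R^3_R: it has a basis {x}. *)
Definition is_point (S : {set 'rV[R]_3}) : Prop :=
  exists x : 'rV[R]_3,
    injective (lincomb1 x) /\ S = [set lincomb1 x r | r : R].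

(* S is a free rank-2 submodule of R^3_R: it has a basis {x, y}. *)
Definition is_line (S : {set 'rV[R]_3}) : Prop :=
  exists x y : 'rV[R]_3,
    injective (lincomb2 x y) /\ S = [set lincomb2 x y rs | rs : R * R].

Definition incident (P L : {set 'rV[R]_3}) : bool := P \subset L.

Definition is_proj_arc (A : {set {set 'rV[R]_3}}) (k n : nat) : Prop :=
  [/\ forall P, P \in A -> is_point P,
      #|A| = k
    & forall L, is_line L -> (#|[set P in A | incident P L]| <= n)%N].

Definition has_proj_arc (k n : nat) : Prop :=
  exists A : {set {set 'rV[R]_3}}, is_proj_arc A k n.

End PHG.

From HB Require Import structures.
From mathcomp Require Import all_boot all_order all_algebra.
From mathcomp Require Import ring.

Set Implicit Arguments.
Unset Strict Implicit.
Unset Printing Implicit Defensive.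

Import GRing.Theory.
Local Open Scope ring_scope.

(** Each arc is given by generators t of its points tR in R^3.  A line of PHG(2,R) with
    basis p, q lies in the kernel of a unimodular linear form u: the residues of p and q
    remain independent over the residue field F4, so for commutative R the cross product
    of p and q has a unit coordinate and annihilates both, while for the skew ring T4 one
    takes the cross product of the residues and adjusts the X-part of u by solving a
    linear system over F4 whose coefficients are the Frobenius images of the residues.
    Hence a line contains at most as many arc points as there are generators t with
    u t = 0, and the arc condition becomes a finite check over all unimodular forms u,
    carried out by computation. *)

Section Triples.
Variables (T : Type) (add mul : T -> T -> T).

Definition dot3 (u t : T * T * T) : T :=
  add (add (mul u.1.1 t.1.1) (mul u.1.2 t.1.2)) (mul u.2 t.2).

Definition scale3 (t : T * T * T) (r : T) : T * T * T :=
  (mul t.1.1 r, mul t.1.2 r, mul t.2 r).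

End Triples.

Lemma triple_ext (T : Type) (x y : T * T * T) :
  x.1.1 = y.1.1 -> x.1.2 = y.1.2 -> x.2 = y.2 -> x = y.
Proof. by case: x y => [[? ?] ?] [[? ?] ?] /= -> -> ->. Qed.

Definition map3 (A B : Type) (f : A -> B) (t : A * A * A) : B * B * B :=
  (f t.1.1, f t.1.2, f t.2).

Section Map3.
Variables (A B : Type) (addA mulA : A -> A -> A) (addB mulB : B -> B -> B) (f : A -> B).
Hypotheses (fD : {morph f : x y / addA x y >-> addB x y})
           (fM : {morph f : x y / mulA x y >-> mulB x y}).

Lemma map3_dot3 u t : f (dot3 addA mulA u t) = dot3 addB mulB (map3 f u) (map3 f t).
Proof. by rewrite /dot3 !fD !fM. Qed.

Lemma map3_scale3 t r : map3 f (scale3 mulA t r) = scale3 mulB (map3 f t) (f r).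
Proof. by rewrite /scale3 /map3 /= !fM. Qed.

End Map3.

Notation dot := (dot3 +%R *%R).
Notation tscale := (scale3 *%R).

Definition left_unit3 (T : eqType) (mul : T -> T -> T) (one : T) (w : T) (u : T * T * T) :=
  [|| mul w u.1.1 == one, mul w u.1.2 == one | mul w u.2 == one].

Section Forms.
Variable R : nzRingType.
Implicit Types (p q t u : R * R * R) (r : R).

Definition unimodular u : Prop := exists w : R, left_unit3 *%R 1 w u.

Definition span2 p q (rs : R * R) : R * R * R := tscale p rs.1 + tscale q rs.2.

Definition has_dual_forms : Prop :=
  forall p q, injective (span2 p q) ->
  exists u, [/\ unimodular u, dot u p = 0 & dot u q = 0].

Lemma dotD u t t' : dot u (t + t') = dot u t + dot u t'.
Proof. by rewrite /dot3 /= !mulrDr (addrACA (u.1.1 * t.1.1)) [LHS]addrACA. Qed.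

Lemma dot_tscale u t r : dot u (tscale t r) = dot u t * r.
Proof. by rewrite /dot3 /= !mulrDl !mulrA. Qed.

Lemma dot_span2 u p q rs : dot u (span2 p q rs) = dot u p * rs.1 + dot u q * rs.2.
Proof. by rewrite dotD !dot_tscale. Qed.

End Forms.

Lemma tscale_inj (R : nzRingType) (t : R * R * R) : unimodular t -> injective (tscale t).
Proof.
case=> w /or3P unit_w r r' [e1 e2 e3]; rewrite -[r]mul1r -[r']mul1r.
by case: unit_w => /eqP <-; rewrite -!mulrA ?e1 ?e2 ?e3.
Qed.

(** * The arc criterion *)

Section ArcCriterion.
Variable R : finNzRingType.
Implicit Types (s t u : R * R * R) (x y : 'rV[R]_3).

Definition vec t : 'rV[R]_3 := \row_i [:: t.1.1; t.1.2; t.2]`_i.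
Definition coords x : R * R * R := (x 0 0, x 0 1, x 0 2).

Lemma vecK : cancel vec coords.
Proof. by move=> [[a b] c]; rewrite /coords !mxE. Qed.

Lemma coords_inj : injective coords.
Proof.
move=> x y [e0 e1 e2]; apply/rowP => -[[|[|[|//]]] lt_i3].
- by rewrite (_ : Ordinal lt_i3 = 0) //; apply: val_inj.
- by rewrite (_ : Ordinal lt_i3 = 1) //; apply: val_inj.
- by rewrite (_ : Ordinal lt_i3 = 2) //; apply: val_inj.
Qed.

Lemma coords_lincomb2 x y rs : coords (lincomb2 x y rs) = span2 (coords x) (coords y) rs.
Proof. by rewrite /coords !mxE. Qed.

Lemma lincomb1_vec t r : lincomb1 (vec t) r = vec (tscale t r).
Proof. by apply: coords_inj; rewrite vecK /coords !mxE. Qed.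

Definition pt x : {set 'rV[R]_3} := [set lincomb1 x r | r : R].

Lemma mem_pt x : x \in pt x.
Proof. by apply/imsetP; exists 1 => //; apply/rowP => i; rewrite !mxE mulr1. Qed.

Lemma pt_vec_point t : unimodular t -> is_point (pt (vec t)).
Proof.
move=> t_unim; exists (vec t); split=> // r r'.
by rewrite !lincomb1_vec => /(can_inj vecK) /(tscale_inj t_unim).
Qed.

Definition vec_arc (pts : seq (R * R * R)) : {set {set 'rV[R]_3}} :=
  [set pt (vec t) | t in pts].

Lemma card_vec_arc pts :
  uniq pts -> {in pts &, forall s t r, tscale s r = t -> s = t} ->
  #|vec_arc pts| = size pts.
Proof.
move=> uniq_pts no_prop; rewrite card_in_imset; first exact/card_uniqP.
move=> s t s_in t_in eq_st; have := mem_pt (vec t); rewrite -eq_st.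
case/imsetP => r _; rewrite lincomb1_vec => /(can_inj vecK) t_eq.
exact: (no_prop s t s_in t_in r (esym t_eq)).
Qed.

Lemma card_vec_arc_on_line pts u x y :
  dot u (coords x) = 0 -> dot u (coords y) = 0 ->
  (#|[set P in vec_arc pts | incident P [set lincomb2 x y rs | rs : R * R]]|
    <= count (fun t => dot u t == 0%R) pts)%N.
Proof.
move=> ux uy; rewrite -size_filter -(size_map (fun t => pt (vec t))).
apply: leq_trans (card_size _); apply: subset_leq_card; apply/subsetP => P.
rewrite inE => /andP [/imsetP [t t_in ->] /subsetP /(_ _ (mem_pt _))].
case/imsetP => rs _ /(congr1 coords); rewrite vecK coords_lincomb2 => t_def.
by apply: map_f; rewrite mem_filter t_in t_def dot_span2 ux uy !mul0r addr0 eqxx.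
Qed.

Lemma proj_arc_of_dual_forms pts n :
  has_dual_forms R ->
  {in pts, forall t, unimodular t} -> uniq pts ->
  {in pts &, forall s t r, tscale s r = t -> s = t} ->
  (forall u, unimodular u -> count (fun t => dot u t == 0%R) pts <= n)%N ->
  has_proj_arc R (size pts) n.
Proof.
move=> dual_forms pts_unim uniq_pts no_prop count_le.
exists (vec_arc pts); split; first by move=> _ /imsetP [t /pts_unim/pt_vec_point ? ->].
  exact: card_vec_arc.
move=> L [x [y [inj_xy ->]]].
have free : injective (span2 (coords x) (coords y)).
  by move=> rs rs'; rewrite -!coords_lincomb2 => /coords_inj /inj_xy.
have [u [u_unim ux uy]] := dual_forms _ _ free.
exact: leq_trans (card_vec_arc_on_line pts ux uy) (count_le u u_unim).
Qed.

End ArcCriterion.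

(** * Dual forms from the residue field *)

Lemma triple_neq0 (V : zmodType) (x : V * V * V) :
  x != 0 -> [\/ x.1.1 != 0, x.1.2 != 0 | x.2 != 0].
Proof.
move=> /eqP x_neq0; apply/or3P; apply: contra_notT x_neq0.
by rewrite !negb_or !negbK => /and3P [/eqP ? /eqP ? /eqP ?]; apply: triple_ext.
Qed.

Lemma map3_neq0 (V W : zmodType) (f : V -> W) (c : V * V * V) :
  (forall x, f x = 0 -> x = 0) -> c != 0 -> map3 f c != 0.
Proof.
move=> f_eq0; apply: contra_neq => /(congr1 (fun c => (c.1.1, c.1.2, c.2))) [].
by move=> /f_eq0 ? /f_eq0 ? /f_eq0 ?; apply: triple_ext.
Qed.

Section Span.
Variables (R S : nzRingType) (f : R -> S).
Hypotheses (fD : {morph f : a b / a + b}) (fM : {morph f : a b / a * b}).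
Implicit Types (p q : R * R * R).

Lemma map3_span2 p q a b : map3 f (span2 p q (a, b)) = span2 (map3 f p) (map3 f q) (f a, f b).
Proof. by apply: triple_ext; rewrite /= fD !fM. Qed.

End Span.

Lemma tscale_span2 (R : nzRingType) (p q : R * R * R) a b r :
  tscale (span2 p q (a, b)) r = span2 p q (a * r, b * r).
Proof. by apply: triple_ext; rewrite /= mulrDl !mulrA. Qed.

Lemma span2_0 (R : nzRingType) (p q : R * R * R) : span2 p q (0, 0) = 0.
Proof. by apply: triple_ext; rewrite /= !mulr0 addr0. Qed.

Definition cross (R : nzRingType) (p q : R * R * R) : R * R * R :=
  (p.1.2 * q.2 - p.2 * q.1.2, p.2 * q.1.1 - p.1.1 * q.2, p.1.1 * q.1.2 - p.1.2 * q.1.1).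

Lemma map3_cross (R S : nzRingType) (f : R -> S) :
  {morph f : a b / a - b} -> {morph f : a b / a * b} -> {morph map3 f : p q / cross p q}.
Proof. by move=> fB fM p q; rewrite /map3 /cross /= !fB !fM. Qed.

Section CrossProduct.
Variable R : comNzRingType.
Implicit Types p q : R * R * R.

Lemma dot_cross_l p q : dot (cross p q) p = 0.
Proof. by rewrite /dot3 /=; ring. Qed.

Lemma dot_cross_r p q : dot (cross p q) q = 0.
Proof. by rewrite /dot3 /=; ring. Qed.

Lemma cross_eq0 p q : cross p q = 0 -> exists2 ab : R * R, ab != 0 & span2 p q ab = 0.
Proof.
case: p q => [[p0 p1] p2] [[q0 q1] q2] /(congr1 (fun c => (c.1.1, c.1.2, c.2))) [c0 c1 c2].
have pair_neq0 (a b : R) : b != 0 -> (a, - b) != 0.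
  by move=> b_neq0; apply: contraNneq b_neq0 => /(congr1 snd) /= /eqP; rewrite oppr_eq0.
have [p0_0 | p0_neq0] := eqVneq p0 0; last first.
  exists (q0, - p0); first exact: pair_neq0.
  by apply: triple_ext => /=; [ring | rewrite -oppr0 -c2; ring | rewrite -c1; ring].
have [p1_0 | p1_neq0] := eqVneq p1 0; last first.
  exists (q1, - p1); first exact: pair_neq0.
  by apply: triple_ext => /=; [rewrite -c2; ring | ring | rewrite -oppr0 -c0; ring].
have [p2_0 | p2_neq0] := eqVneq p2 0; last first.
  exists (q2, - p2); first exact: pair_neq0.
  by apply: triple_ext => /=; [rewrite -oppr0 -c1; ring | rewrite -c0; ring | ring].
exists (1, 0); first by apply: contra_neq (@oner_neq0 R) => /(congr1 fst).
by apply: triple_ext; rewrite /= mulr1 mulr0 addr0.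
Qed.

End CrossProduct.

Lemma cross_neq0_dot_surj (F : fieldType) (p q : F * F * F) :
  cross p q != 0 -> forall s t : F, exists d, dot d p = s /\ dot d q = t.
Proof.
case: p q => [[p0 p1] p2] [[q0 q1] q2] /triple_neq0 /= [c0 | c1 | c2] s t.
- exists (0, (s * q2 - t * p2) / (p1 * q2 - p2 * q1), (t * p1 - s * q1) / (p1 * q2 - p2 * q1)).
  by split; rewrite /dot3 /=; field.
- exists ((t * p2 - s * q2) / (p2 * q0 - p0 * q2), 0, (s * q0 - t * p0) / (p2 * q0 - p0 * q2)).
  by split; rewrite /dot3 /=; field.
- exists ((s * q1 - t * p1) / (p0 * q1 - p1 * q0), (t * p0 - s * q0) / (p0 * q1 - p1 * q0), 0).
  by split; rewrite /dot3 /=; field.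
Qed.

(* The chain ring structure of length 2: [rho] is reduction modulo the maximal ideal,
   which is the left annihilator of [theta]. *)
Definition residue_map (R : nzRingType) (F : comNzRingType) (rho : R -> F) (lift : F -> R)
    (theta : R) : Prop :=
  [/\ {morph rho : a b / a + b}, {morph rho : a b / a * b}, cancel lift rho,
      forall a, (rho a == 0) = (a * theta == 0)
    & forall a, rho a != 0 -> exists w, w * a = 1].

Section ResidueField.
Variables (R : nzRingType) (F : comNzRingType) (rho : R -> F) (lift : F -> R) (theta : R).
Hypothesis rho_res : residue_map rho lift theta.
Implicit Types (p q s u : R * R * R).

Lemma residue_mapB : {morph rho : a b / a - b}.
Proof.
case: rho_res => rhoD _ _ _ _ a b.
by apply: (addIr (rho b)); rewrite -rhoD !subrK.
Qed.

Lemma residue_unimodular u : map3 rho u != 0 -> unimodular u.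
Proof.
case: rho_res => _ _ _ _ rho_unit.
by case/triple_neq0 => /rho_unit [w /eqP w_u]; exists w; rewrite /left_unit3 w_u ?orbT.
Qed.

(* A relation [rho(p) a + rho(q) b = 0] lifts to [p (lift a * theta) + q (lift b * theta) = 0]. *)
Lemma residue_cross_neq0 p q : injective (span2 p q) -> cross (map3 rho p) (map3 rho q) != 0.
Proof.
case: rho_res => rhoD rhoM liftK ker_rho _ free_pq.
have lift_ann a : (lift a * theta == 0) = (a == 0) by rewrite -ker_rho liftK.
apply/eqP => /cross_eq0 [[a b] ab_neq0].
rewrite -[a]liftK -[b]liftK -map3_span2 //.
move=> /(congr1 (fun c => (c.1.1, c.1.2, c.2))) [s0 s1 s2].
have : span2 p q (lift a * theta, lift b * theta) = span2 p q (0, 0).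
  rewrite -tscale_span2 span2_0.
  by apply: triple_ext => /=; apply/eqP; rewrite -ker_rho ?s0 ?s1 ?s2.
case/free_pq => /eqP; rewrite lift_ann => /eqP a0 /eqP; rewrite lift_ann => /eqP b0.
by move: ab_neq0; rewrite a0 b0 eqxx.
Qed.

End ResidueField.

Lemma residue_dual_forms (R F : comNzRingType) (rho : R -> F) lift theta :
  residue_map rho lift theta -> has_dual_forms R.
Proof.
move=> rho_res p q free_pq; exists (cross p q); split; [|exact: dot_cross_l|exact: dot_cross_r].
apply: (residue_unimodular rho_res); rewrite map3_cross; last by case: rho_res.
  exact: residue_cross_neq0 rho_res _ _ free_pq.
exact: residue_mapB rho_res.
Qed.

(** * Computation through codes *)

(* Ring arithmetic is too slow under [vm_compute], so a ring [R] is encoded by the codes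
   [0 .. N-1] through [dec], and its operations by tables of codes. *)
Definition code3 := (nat * nat * nat)%type.

Section Encoding.
Variables (R : finNzRingType) (dec : nat -> R) (N : nat).

Local Notation codes := (iota 0 N).

Definition enc (x : R) : nat := index x (map dec codes).

Definition table (op : R -> R -> R) : seq (seq nat) :=
  [seq [seq enc (op (dec i) (dec j)) | j <- codes] | i <- codes].

Definition lookup (tab : seq (seq nat)) (i j : nat) : nat := nth 0 (nth [::] tab i) j.

Definition code_triples : seq code3 :=
  [seq (ab, c) | ab <- [seq (a, b) | a <- codes, b <- codes], c <- codes].

Definition in_codes (c : code3) : bool := [&& c.1.1 < N, c.1.2 < N & c.2 < N]%N.

Definition code_unimodular (mul : nat -> nat -> nat) (one : nat) (c : code3) : bool :=
  has (fun w => left_unit3 mul one w c) codes.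

Definition arc_check_with (add mul : nat -> nat -> nat) (zero one : nat)
    (gens : seq code3) (n : nat) : bool :=
  [&& all in_codes gens, all (code_unimodular mul one) gens, uniq gens,
      all (fun s => all (fun t => (s == t) || all (fun r => scale3 mul s r != t) codes) gens) gens
    & all (fun u => code_unimodular mul one u ==>
                    (count (fun t => dot3 add mul u t == zero) gens <= n)%N) code_triples].

(* The [let]s make [vm_compute] build each table only once. *)
Definition arc_check (gens : seq code3) (n : nat) : bool :=
  let add := lookup (table +%R) in let mul := lookup (table *%R) in
  arc_check_with add mul (enc 0) (enc 1) gens n.

Hypotheses (dec_uniq : uniq (map dec codes)) (card_R : #|R| = N).

Lemma mem_dec_codes x : x \in map dec codes.
Proof.
have /subset_cardP/(_ (subset_predT _)) dec_onto : #|map dec codes| = #|R|.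
  by rewrite (card_uniqP dec_uniq) size_map size_iota card_R.
by rewrite dec_onto.
Qed.

Lemma enc_lt x : (enc x < N)%N.
Proof. by rewrite -[N](size_iota 0) -(size_map dec) index_mem mem_dec_codes. Qed.

Lemma encK : cancel enc dec.
Proof.
move=> x; rewrite -[enc x]add0n -(nth_iota 0 0 (enc_lt x)).
by rewrite -(nth_map 0 (dec 0)) ?size_iota ?enc_lt // nth_index ?mem_dec_codes.
Qed.

Lemma enc_inj : injective enc.
Proof. exact: can_inj encK. Qed.

Lemma decK i : (i < N)%N -> enc (dec i) = i.
Proof.
move=> lt_iN; rewrite /enc -[i in dec i]add0n -(nth_iota 0 0 lt_iN).
by rewrite -(nth_map 0 (dec 0)) ?size_iota // index_uniq ?size_map ?size_iota.
Qed.

Lemma forall_dec (P : pred R) : all (fun i => P (dec i)) codes -> forall x, P x.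
Proof. by move=> /allP P_codes x; rewrite -(encK x); apply: P_codes; rewrite mem_iota enc_lt. Qed.

Lemma forall_dec2 (P : R -> R -> bool) :
  all (fun i => all (fun j => P (dec i) (dec j)) codes) codes -> forall x y, P x y.
Proof.
move=> P_codes x; apply: forall_dec; move: x.
exact: (forall_dec (P := fun x => all (fun j => P x (dec j)) codes)).
Qed.

Lemma residue_map_of_codes (F : comNzRingType) (rho : R -> F) lift theta :
  cancel lift rho ->
  all (fun i => all (fun j =>
         (rho (dec i + dec j) == rho (dec i) + rho (dec j)) &&
         (rho (dec i * dec j) == rho (dec i) * rho (dec j))) codes) codes ->
  all (fun i => ((rho (dec i) == 0) == (dec i * theta == 0)) &&
         ((rho (dec i) != 0) ==> has (fun j => dec j * dec i == 1) codes)) codes ->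
  residue_map rho lift theta.
Proof.
move=> liftK morph_codes local_codes.
have rho_morph := forall_dec2 (P := fun x y =>
  (rho (x + y) == rho x + rho y) && (rho (x * y) == rho x * rho y)) morph_codes.
have rho_local := forall_dec (P := fun x => ((rho x == 0) == (x * theta == 0)) &&
  ((rho x != 0) ==> has (fun j => dec j * x == 1) codes)) local_codes.
split=> // [a b | a b | a | a rho_a].
- by case/andP: (rho_morph a b) => /eqP.
- by case/andP: (rho_morph a b) => _ /eqP.
- by case/andP: (rho_local a) => /eqP.
by case/andP: (rho_local a) => _ /implyP/(_ rho_a)/hasP [j _ /eqP]; exists (dec j).
Qed.

Lemma lookup_table op : {morph enc : x y / op x y >-> lookup (table op) x y}.
Proof.
move=> x y; rewrite /lookup (nth_map 0) ?size_iota ?enc_lt // (nth_map 0) ?size_iota ?enc_lt //.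
by rewrite !nth_iota ?enc_lt // !encK.
Qed.

Local Notation add := (lookup (table +%R)).
Local Notation mul := (lookup (table *%R)).

Lemma enc_dot u t : enc (dot u t) = dot3 add mul (map3 enc u) (map3 enc t).
Proof. by apply: map3_dot3 => x y; rewrite lookup_table. Qed.

Lemma enc_tscale t r : map3 enc (tscale t r) = scale3 mul (map3 enc t) (enc r).
Proof. by apply: map3_scale3 => x y; rewrite lookup_table. Qed.

Lemma in_codesK c : in_codes c -> map3 enc (map3 dec c) = c.
Proof. by case: c => [[a b] c] /and3P [a_lt b_lt c_lt]; rewrite /map3 /= !decK. Qed.

Lemma mem_code_triples u : map3 enc u \in code_triples.
Proof. by rewrite !allpairs_f // mem_iota enc_lt. Qed.

Lemma unimodular_code u : unimodular u <-> code_unimodular mul (enc 1) (map3 enc u).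
Proof.
have enc_unit w : left_unit3 *%R 1 w u = left_unit3 mul (enc 1) (enc w) (map3 enc u).
  by rewrite /left_unit3 /= -!lookup_table !(inj_eq enc_inj).
split=> [[w w_unit] | /hasP [i]].
  by apply/hasP; exists (enc w); rewrite ?mem_iota ?enc_lt -?enc_unit.
by rewrite mem_iota => /andP [_ /decK <-]; rewrite -enc_unit; exists (dec i).
Qed.

Lemma proj_arc_of_check gens n :
  has_dual_forms R -> arc_check gens n -> has_proj_arc R (size gens) n.
Proof.
move=> dual_forms /and5P [/allP gens_in /allP gens_unim uniq_gens /allP no_prop /allP count_le].
have decK3 : {in gens, cancel (map3 dec) (map3 enc)} by move=> c /gens_in /in_codesK.
rewrite -(size_map (map3 dec)); apply: proj_arc_of_dual_forms => //.
- by move=> _ /mapP [c c_in ->]; apply/unimodular_code; rewrite decK3 // gens_unim.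
- by rewrite (map_inj_in_uniq (can_in_inj decK3)).
- move=> _ _ /mapP [s s_in ->] /mapP [t t_in ->] r /(congr1 (map3 enc)).
  rewrite enc_tscale !decK3 // => scale_st.
  have /orP [/eqP -> // | /allP /(_ (enc r))] := allP (no_prop s s_in) t t_in.
  by rewrite mem_iota enc_lt scale_st eqxx => /(_ isT).
- move=> u /unimodular_code u_unim.
  rewrite count_map (eq_in_count (a2 := fun c => dot3 add mul (map3 enc u) c == enc 0)).
    exact: implyP (count_le _ (mem_code_triples u)) u_unim.
  by move=> c c_in /=; rewrite -(inj_eq enc_inj) enc_dot decK3.
Qed.

End Encoding.

Definition decF4 (k : nat) : F4 := ((k %/ 2)%:R, (k %% 2)%:R).

Lemma decF4_uniq : uniq (map decF4 (iota 0 4)). Proof. by vm_compute. Qed.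

Lemma card_F4 : #|{: F4}| = 4%N. Proof. by rewrite card_prod card_ord. Qed.

(* The unit group of F4 has order 3. *)
Lemma F4_mulVf (x : F4) : x != 0 -> x ^+ 2 * x = 1.
Proof.
move=> x_neq0; apply/eqP; move: x_neq0; apply/implyP; move: x.
by apply: (forall_dec decF4_uniq card_F4); vm_compute.
Qed.

Lemma F4_inv0 : (0 : F4) ^+ 2 = 0.
Proof. exact: expr0n. Qed.

HB.instance Definition _ := GRing.ComNzRing_isField.Build F4 F4_mulVf F4_inv0.

Lemma F4_pchar2 : (2 \in [pchar F4])%N.
Proof. by apply/andP; split=> //; apply/eqP. Qed.

Local Notation frob := (pFrobenius_aut F4_pchar2).

Lemma G4_mulC : commutative (@GRing.mul G4).
Proof. by move=> [a b] [c d]; apply: injective_projections => /=; ring. Qed.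

HB.instance Definition _ := GRing.PzSemiRing_hasCommutativeMul.Build G4 G4_mulC.

Definition decG4 (k : nat) : G4 := ((k %/ 4)%:R, (k %% 4)%:R).

Lemma decG4_uniq : uniq (map decG4 (iota 0 16)). Proof. by vm_compute. Qed.

Lemma card_G4 : #|{: G4}| = 16%N. Proof. by rewrite card_prod !card_ord. Qed.

(* Reduction modulo 2: [n%:R] in ['F_2] is [n] modulo 2. *)
Definition resG4 (x : G4) : F4 := ((x.1 : nat)%:R, (x.2 : nat)%:R).
Definition liftG4 (a : F4) : G4 := ((a.1 : nat)%:R, (a.2 : nat)%:R).

Lemma residue_map_G4 : residue_map resG4 liftG4 2%:R.
Proof.
apply: (residue_map_of_codes decG4_uniq card_G4); [|by vm_compute|by vm_compute].
by move=> a; apply/eqP; move: a; apply: (forall_dec decF4_uniq card_F4); vm_compute.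
Qed.

Definition decS4 (k : nat) : S4 := (decF4 (k %/ 4), decF4 (k %% 4)).

Lemma decS4_uniq : uniq (map decS4 (iota 0 16)). Proof. by vm_compute. Qed.

Lemma card_S4 : #|{: S4}| = 16%N. Proof. by rewrite card_prod card_F4. Qed.

Lemma residue_map_S4 : residue_map (fst : S4 -> F4) (fun a => (a, 0)) (0, 1).
Proof. by apply: (residue_map_of_codes decS4_uniq card_S4) => //; vm_compute. Qed.

Definition zip3 (A B : Type) (c : A * A * A) (d : B * B * B) : (A * B) * (A * B) * (A * B) :=
  ((c.1.1, d.1.1), (c.1.2, d.1.2), (c.2, d.2)).

Lemma zip3K (A B : Type) (p : (A * B) * (A * B) * (A * B)) : zip3 (map3 fst p) (map3 snd p) = p.
Proof. by case: p => [[[? ?] [? ?]] [? ?]]. Qed.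

Lemma dot_T4 (c d a b : F4 * F4 * F4) :
  dot (zip3 c d : T4 * T4 * T4) (zip3 a b) = (dot c a, dot c b + dot d (map3 frob a)).
Proof. by apply: injective_projections; rewrite /= /dot3 /=; unfold GRing.pFrobenius_aut; ring. Qed.

Definition decT4 (k : nat) : T4 := (decF4 (k %/ 4), decF4 (k %% 4)).

Lemma decT4_uniq : uniq (map decT4 (iota 0 16)). Proof. by vm_compute. Qed.

Lemma card_T4 : #|{: T4}| = 16%N. Proof. by rewrite card_prod card_F4. Qed.

Lemma residue_map_T4 : residue_map (fst : T4 -> F4) (fun a => (a, 0)) (0, 1).
Proof. by apply: (residue_map_of_codes decT4_uniq card_T4) => //; vm_compute. Qed.

(* With [u = c + d X], [c] is the residue cross product, and [d] cancels the X-parts of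
   [u p] and [u q] (see [dot_T4]). *)
Lemma dual_forms_T4 : has_dual_forms T4.
Proof.
move=> p q free_pq; set c := cross (map3 fst p) (map3 fst q).
have c_neq0 : c != 0 by apply: residue_cross_neq0 residue_map_T4 _ _ free_pq.
have frob_c_neq0 : cross (map3 frob (map3 fst p)) (map3 frob (map3 fst q)) != 0.
  rewrite -map3_cross => [|a b|a b]; rewrite ?rmorphB ?rmorphM //.
  by apply: map3_neq0 c_neq0 => x /eqP; rewrite fmorph_eq0 => /eqP.
have [d [dp dq]] := cross_neq0_dot_surj frob_c_neq0
  (- dot c (map3 snd p)) (- dot c (map3 snd q)).
exists (zip3 c d); split.
- by apply: (residue_unimodular residue_map_T4).
- by rewrite -[p]zip3K dot_T4 dot_cross_l dp subrr.
- by rewrite -[q]zip3K dot_T4 dot_cross_r dq subrr.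
Qed.

Local Close Scope ring_scope.

(** * The arcs *)

(* A code triple [(a, b, c)] stands for the generator [(dec a, dec b, dec c)], where [dec]
   is [decG4], [decS4] or [decT4]. *)
Definition arcG4_120 : seq code3 := [::
  (0, 0, 1); (0, 1, 0); (0, 1, 5); (0, 1, 6); (0, 1, 10); (0, 1, 12); (0, 1, 13); (0, 2, 4);
  (1, 0, 0); (1, 0, 1); (1, 0, 3); (1, 0, 4); (1, 0, 10); (1, 0, 12); (1, 1, 3); (1, 1, 4);
  (1, 1, 5); (1, 1, 11); (1, 1, 13); (1, 1, 14); (1, 2, 1); (1, 2, 4); (1, 2, 6); (1, 2, 9);
  (1, 2, 13); (1, 2, 15); (1, 3, 0); (1, 3, 1); (1, 3, 2); (1, 3, 3); (1, 3, 12);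
  (1, 3, 14); (1, 4, 1); (1, 4, 2); (1, 4, 10); (1, 4, 11); (1, 4, 12); (1, 4, 14);
  (1, 5, 0); (1, 5, 3); (1, 5, 6); (1, 5, 8); (1, 5, 11); (1, 5, 14); (1, 6, 1); (1, 6, 2);
  (1, 6, 5); (1, 6, 8); (1, 6, 9); (1, 6, 15); (1, 7, 0); (1, 7, 7); (1, 7, 9); (1, 7, 10);
  (1, 7, 11); (1, 7, 15); (1, 8, 2); (1, 8, 3); (1, 8, 5); (1, 8, 9); (1, 8, 15); (1, 9, 2);
  (1, 9, 4); (1, 9, 7); (1, 9, 8); (1, 9, 12); (1, 9, 13); (1, 10, 5); (1, 10, 6);
  (1, 10, 13); (1, 11, 0); (1, 11, 1); (1, 11, 5); (1, 11, 7); (1, 11, 8); (1, 12, 6);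
  (1, 12, 7); (1, 12, 8); (1, 12, 10); (1, 12, 14); (1, 12, 15); (1, 13, 4); (1, 13, 8);
  (1, 13, 10); (1, 13, 13); (1, 13, 14); (1, 13, 15); (1, 14, 5); (1, 14, 6); (1, 14, 7);
  (1, 14, 9); (1, 14, 11); (1, 15, 3); (1, 15, 4); (1, 15, 6); (1, 15, 7); (1, 15, 9);
  (1, 15, 13); (2, 0, 1); (2, 1, 3); (2, 1, 4); (2, 1, 8); (2, 1, 9); (2, 1, 10);
  (2, 1, 12); (2, 2, 1); (2, 4, 3); (2, 4, 4); (2, 4, 7); (2, 4, 11); (2, 4, 12);
  (2, 4, 15); (2, 5, 0); (2, 5, 2); (2, 5, 5); (2, 5, 6); (2, 5, 7); (2, 5, 14); (2, 8, 5);
  (2, 10, 5)].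

Definition arcG4_140 : seq code3 := [::
  (0, 1, 1); (1, 2, 8); (2, 4, 5); (1, 6, 11); (1, 12, 0); (2, 5, 7); (1, 2, 0); (2, 1, 4);
  (1, 14, 11); (1, 4, 2); (0, 1, 2); (2, 1, 7); (1, 5, 4); (1, 8, 7); (1, 5, 8); (2, 5, 8);
  (2, 4, 1); (1, 13, 12); (1, 8, 13); (1, 13, 2); (0, 1, 5); (1, 7, 6); (1, 8, 15);
  (1, 7, 0); (2, 4, 10); (2, 5, 6); (1, 15, 14); (1, 8, 5); (1, 15, 10); (2, 1, 0);
  (0, 1, 6); (1, 12, 11); (1, 6, 8); (2, 1, 3); (1, 2, 10); (2, 5, 11); (1, 4, 11);
  (1, 14, 10); (2, 4, 6); (1, 2, 2); (0, 1, 8); (2, 5, 14); (1, 7, 12); (1, 0, 15);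
  (1, 13, 8); (2, 5, 0); (0, 1, 15); (1, 15, 4); (1, 0, 5); (1, 5, 2); (0, 1, 11);
  (1, 8, 0); (2, 1, 14); (1, 12, 1); (1, 14, 0); (2, 5, 15); (1, 8, 8); (2, 4, 7);
  (1, 4, 1); (1, 6, 2); (0, 1, 12); (1, 14, 1); (1, 12, 10); (2, 4, 4); (1, 8, 10);
  (2, 5, 3); (1, 6, 1); (1, 4, 8); (2, 1, 9); (1, 8, 2); (0, 2, 4); (1, 9, 7); (1, 9, 3);
  (1, 11, 14); (1, 11, 2); (1, 0, 4); (1, 6, 6); (1, 7, 1); (1, 5, 15); (1, 6, 13);
  (1, 0, 6); (1, 14, 12); (1, 15, 1); (1, 13, 13); (1, 14, 5); (1, 0, 7); (1, 15, 0);
  (2, 4, 8); (2, 1, 13); (1, 13, 6); (1, 0, 13); (1, 7, 10); (2, 1, 10); (2, 4, 3);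
  (1, 5, 14); (1, 0, 12); (1, 12, 4); (1, 13, 1); (1, 15, 7); (1, 12, 7); (1, 0, 14);
  (1, 4, 14); (1, 5, 1); (1, 7, 5); (1, 4, 15); (1, 2, 4); (1, 12, 14); (1, 7, 11);
  (1, 7, 15); (1, 14, 15); (1, 2, 6); (1, 4, 4); (1, 15, 11); (1, 15, 13); (1, 6, 7);
  (1, 2, 12); (1, 6, 12); (1, 13, 11); (1, 13, 7); (1, 4, 5); (1, 2, 14); (1, 14, 6);
  (1, 5, 11); (1, 5, 5); (1, 12, 13); (1, 9, 1); (1, 11, 12); (1, 11, 10); (2, 10, 5);
  (1, 9, 15); (1, 9, 5); (1, 9, 9); (1, 11, 4); (1, 11, 0); (2, 8, 1); (1, 9, 11);
  (1, 11, 6); (1, 11, 8); (2, 0, 4); (1, 9, 13)].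

Definition arcG4_152 : seq code3 := [::
  (0, 0, 1); (0, 1, 1); (0, 1, 3); (0, 1, 4); (0, 1, 5); (0, 1, 7); (0, 1, 12); (0, 1, 15);
  (0, 2, 1); (0, 2, 5); (1, 0, 1); (1, 0, 2); (1, 0, 7); (1, 0, 8); (1, 0, 9); (1, 0, 12);
  (1, 0, 13); (1, 0, 14); (1, 1, 1); (1, 1, 2); (1, 1, 3); (1, 1, 6); (1, 1, 9); (1, 1, 10);
  (1, 1, 14); (1, 1, 15); (1, 2, 1); (1, 2, 3); (1, 2, 4); (1, 2, 6); (1, 2, 7); (1, 2, 8);
  (1, 2, 10); (1, 2, 15); (1, 3, 0); (1, 3, 2); (1, 3, 4); (1, 3, 7); (1, 3, 11);
  (1, 3, 13); (1, 3, 14); (1, 3, 15); (1, 4, 0); (1, 4, 1); (1, 4, 2); (1, 4, 4);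
  (1, 4, 11); (1, 4, 12); (1, 5, 0); (1, 5, 7); (1, 5, 8); (1, 5, 9); (1, 5, 10);
  (1, 5, 11); (1, 5, 15); (1, 6, 1); (1, 6, 3); (1, 6, 5); (1, 6, 7); (1, 6, 8); (1, 6, 12);
  (1, 6, 13); (1, 6, 14); (1, 7, 1); (1, 7, 3); (1, 7, 7); (1, 7, 11); (1, 7, 12);
  (1, 7, 13); (1, 7, 14); (1, 8, 2); (1, 8, 3); (1, 8, 4); (1, 8, 5); (1, 8, 6); (1, 8, 9);
  (1, 8, 10); (1, 8, 15); (1, 9, 4); (1, 9, 6); (1, 9, 9); (1, 9, 11); (1, 9, 13);
  (1, 9, 15); (1, 10, 0); (1, 10, 1); (1, 10, 3); (1, 10, 8); (1, 10, 12); (1, 10, 13);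
  (1, 10, 14); (1, 10, 15); (1, 11, 0); (1, 11, 3); (1, 11, 7); (1, 11, 10); (1, 11, 11);
  (1, 11, 13); (1, 12, 0); (1, 12, 2); (1, 12, 3); (1, 12, 7); (1, 12, 8); (1, 12, 11);
  (1, 12, 13); (1, 12, 15); (1, 13, 0); (1, 13, 2); (1, 13, 6); (1, 13, 8); (1, 13, 12);
  (1, 13, 13); (1, 13, 15); (1, 14, 2); (1, 14, 4); (1, 14, 8); (1, 14, 13); (1, 14, 14);
  (1, 14, 15); (1, 15, 0); (1, 15, 1); (1, 15, 6); (1, 15, 9); (1, 15, 10); (1, 15, 11);
  (1, 15, 14); (2, 0, 5); (2, 1, 0); (2, 1, 1); (2, 1, 2); (2, 1, 5); (2, 1, 7); (2, 1, 9);
  (2, 1, 13); (2, 2, 1); (2, 4, 1); (2, 4, 2); (2, 4, 3); (2, 4, 7); (2, 4, 8); (2, 4, 14);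
  (2, 4, 15); (2, 5, 0); (2, 5, 1); (2, 5, 5); (2, 5, 7); (2, 5, 8); (2, 5, 9); (2, 5, 15);
  (2, 8, 5); (2, 10, 1); (2, 10, 4)].

Definition arcS4_120 : seq code3 := [::
  (0, 4, 1); (0, 4, 2); (0, 4, 8); (0, 4, 10); (0, 4, 13); (0, 4, 14); (1, 0, 4);
  (1, 0, 12); (1, 2, 4); (1, 2, 8); (1, 3, 8); (1, 3, 12); (1, 8, 0); (1, 8, 3); (1, 8, 5);
  (1, 8, 6); (1, 8, 13); (1, 8, 15); (1, 12, 0); (1, 12, 3); (1, 12, 4); (1, 12, 6);
  (1, 12, 9); (1, 12, 10); (4, 0, 1); (4, 0, 3); (4, 0, 4); (4, 0, 7); (4, 0, 12);
  (4, 0, 13); (4, 1, 4); (4, 1, 6); (4, 1, 9); (4, 1, 11); (4, 1, 13); (4, 1, 15);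
  (4, 2, 1); (4, 2, 2); (4, 2, 8); (4, 2, 9); (4, 2, 12); (4, 2, 15); (4, 3, 2); (4, 3, 3);
  (4, 3, 6); (4, 3, 7); (4, 3, 8); (4, 3, 11); (4, 4, 0); (4, 4, 2); (4, 4, 6); (4, 4, 7);
  (4, 4, 8); (4, 4, 11); (4, 4, 12); (4, 4, 15); (4, 5, 1); (4, 5, 2); (4, 5, 4); (4, 5, 6);
  (4, 5, 8); (4, 5, 9); (4, 5, 14); (4, 5, 15); (4, 6, 0); (4, 6, 1); (4, 6, 4); (4, 6, 7);
  (4, 6, 9); (4, 6, 11); (4, 6, 12); (4, 6, 14); (4, 8, 0); (4, 8, 2); (4, 8, 4); (4, 8, 7);
  (4, 8, 12); (4, 8, 13); (4, 9, 2); (4, 9, 3); (4, 9, 6); (4, 9, 7); (4, 9, 9); (4, 9, 11);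
  (4, 10, 4); (4, 10, 6); (4, 10, 8); (4, 10, 9); (4, 10, 12); (4, 10, 14); (4, 11, 0);
  (4, 11, 3); (4, 11, 8); (4, 11, 11); (4, 11, 13); (4, 11, 14); (4, 12, 4); (4, 12, 6);
  (4, 12, 9); (4, 12, 11); (4, 12, 13); (4, 12, 14); (4, 13, 0); (4, 13, 3); (4, 13, 6);
  (4, 13, 7); (4, 13, 8); (4, 13, 11); (4, 14, 1); (4, 14, 3); (4, 14, 8); (4, 14, 9);
  (4, 14, 14); (4, 14, 15); (4, 15, 0); (4, 15, 1); (4, 15, 4); (4, 15, 7); (4, 15, 13);
  (4, 15, 15)].

Definition arcS4_140 : seq code3 := [::
  (0, 1, 4); (4, 11, 9); (4, 4, 0); (1, 8, 14); (4, 14, 9); (1, 2, 8); (4, 10, 8);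
  (4, 7, 0); (0, 4, 9); (4, 13, 11); (0, 1, 8); (4, 10, 9); (4, 4, 2); (1, 4, 11);
  (4, 15, 8); (1, 1, 8); (4, 11, 8); (4, 7, 2); (1, 12, 6); (4, 12, 10); (0, 4, 0);
  (4, 7, 8); (4, 7, 15); (4, 0, 7); (1, 12, 12); (1, 12, 0); (4, 5, 11); (4, 6, 12);
  (4, 0, 5); (1, 8, 8); (0, 4, 3); (4, 5, 8); (4, 7, 14); (4, 3, 6); (1, 8, 10); (1, 12, 2);
  (4, 7, 11); (4, 6, 13); (4, 3, 4); (1, 12, 15); (0, 4, 4); (1, 4, 0); (4, 6, 10);
  (4, 4, 13); (4, 0, 6); (1, 4, 4); (1, 8, 0); (4, 4, 9); (4, 5, 14); (4, 0, 4); (0, 4, 5);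
  (1, 8, 1); (4, 6, 9); (4, 5, 15); (4, 3, 5); (1, 4, 5); (1, 4, 3); (4, 4, 10); (4, 4, 12);
  (4, 3, 7); (0, 4, 11); (4, 14, 11); (1, 2, 12); (4, 9, 10); (4, 6, 2); (1, 8, 13);
  (4, 13, 9); (1, 3, 4); (4, 8, 11); (4, 5, 2); (0, 4, 13); (4, 1, 10); (4, 5, 5);
  (4, 15, 3); (4, 10, 15); (1, 1, 4); (4, 9, 11); (4, 5, 0); (1, 12, 7); (4, 15, 10);
  (1, 3, 12); (4, 8, 10); (4, 6, 0); (1, 4, 9); (4, 12, 8); (1, 4, 15); (4, 3, 11);
  (4, 4, 6); (4, 14, 0); (4, 8, 14); (1, 8, 4); (4, 0, 9); (4, 6, 7); (4, 12, 1);
  (4, 11, 12); (1, 12, 9); (4, 2, 8); (4, 7, 4); (4, 13, 2); (4, 9, 13); (4, 0, 12);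
  (4, 13, 12); (4, 10, 1); (4, 13, 7); (4, 11, 7); (4, 0, 14); (4, 12, 13); (4, 9, 1);
  (4, 15, 4); (4, 9, 6); (4, 0, 13); (4, 14, 15); (4, 8, 1); (4, 12, 5); (4, 10, 4);
  (4, 0, 15); (4, 15, 14); (4, 11, 1); (4, 14, 6); (4, 8, 5); (4, 3, 12); (4, 14, 14);
  (4, 8, 3); (4, 15, 7); (4, 9, 5); (4, 3, 14); (4, 15, 15); (4, 11, 3); (4, 13, 4);
  (4, 11, 4); (4, 3, 13); (4, 13, 13); (4, 10, 3); (4, 14, 5); (4, 8, 6); (4, 3, 15);
  (4, 12, 12); (4, 9, 3); (4, 12, 6); (4, 10, 7)].

Definition arcS4_152 : seq code3 := [::
  (0, 1, 4); (0, 1, 8); (0, 4, 4); (0, 4, 5); (0, 4, 7); (0, 4, 9); (0, 4, 11); (0, 4, 13);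
  (0, 4, 14); (0, 4, 15); (1, 0, 4); (1, 0, 12); (1, 2, 4); (1, 3, 4); (1, 3, 8);
  (1, 3, 12); (1, 4, 2); (1, 4, 3); (1, 4, 4); (1, 4, 6); (1, 4, 12); (1, 4, 14); (1, 8, 0);
  (1, 8, 3); (1, 8, 4); (1, 8, 6); (1, 8, 7); (1, 8, 11); (1, 8, 12); (1, 8, 14);
  (1, 12, 0); (1, 12, 2); (1, 12, 4); (1, 12, 6); (1, 12, 13); (1, 12, 15); (4, 0, 1);
  (4, 0, 3); (4, 0, 4); (4, 0, 5); (4, 0, 8); (4, 0, 11); (4, 0, 12); (4, 0, 15); (4, 1, 0);
  (4, 1, 3); (4, 1, 4); (4, 1, 7); (4, 1, 9); (4, 1, 10); (4, 1, 13); (4, 1, 15); (4, 2, 0);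
  (4, 2, 1); (4, 2, 4); (4, 2, 6); (4, 2, 8); (4, 2, 11); (4, 2, 13); (4, 2, 15); (4, 3, 0);
  (4, 3, 1); (4, 3, 5); (4, 3, 6); (4, 3, 9); (4, 3, 10); (4, 3, 12); (4, 3, 13); (4, 4, 0);
  (4, 4, 2); (4, 4, 4); (4, 4, 5); (4, 4, 6); (4, 4, 8); (4, 4, 9); (4, 4, 12); (4, 4, 14);
  (4, 4, 15); (4, 6, 1); (4, 6, 2); (4, 6, 4); (4, 6, 6); (4, 6, 8); (4, 6, 10); (4, 6, 14);
  (4, 6, 15); (4, 7, 0); (4, 7, 1); (4, 7, 4); (4, 7, 5); (4, 7, 6); (4, 7, 9); (4, 7, 10);
  (4, 7, 12); (4, 7, 13); (4, 7, 14); (4, 8, 0); (4, 8, 1); (4, 8, 3); (4, 8, 4); (4, 8, 5);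
  (4, 8, 8); (4, 8, 11); (4, 8, 13); (4, 8, 14); (4, 9, 2); (4, 9, 3); (4, 9, 5); (4, 9, 6);
  (4, 9, 9); (4, 9, 11); (4, 9, 12); (4, 9, 14); (4, 9, 15); (4, 10, 2); (4, 11, 1);
  (4, 11, 2); (4, 11, 4); (4, 11, 6); (4, 11, 8); (4, 11, 9); (4, 11, 12); (4, 11, 13);
  (4, 11, 14); (4, 12, 4); (4, 12, 6); (4, 12, 7); (4, 12, 9); (4, 12, 11); (4, 12, 13);
  (4, 12, 15); (4, 13, 2); (4, 13, 3); (4, 13, 4); (4, 13, 5); (4, 13, 6); (4, 13, 9);
  (4, 13, 10); (4, 14, 0); (4, 14, 2); (4, 14, 3); (4, 14, 10); (4, 14, 11); (4, 14, 13);
  (4, 14, 14); (4, 15, 0); (4, 15, 1); (4, 15, 2); (4, 15, 5); (4, 15, 6); (4, 15, 14);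
  (4, 15, 15)].

Definition arcT4_120 : seq code3 := [::
  (0, 0, 4); (0, 1, 12); (0, 4, 1); (0, 4, 3); (0, 4, 4); (0, 4, 6); (0, 4, 13); (0, 4, 15);
  (1, 0, 4); (1, 1, 4); (1, 2, 8); (1, 3, 8); (1, 4, 0); (1, 4, 1); (1, 8, 5); (1, 8, 7);
  (1, 8, 9); (1, 8, 11); (1, 12, 0); (1, 12, 1); (1, 12, 9); (1, 12, 11); (1, 12, 12);
  (1, 12, 14); (4, 0, 0); (4, 0, 2); (4, 0, 8); (4, 0, 10); (4, 0, 13); (4, 0, 14);
  (4, 1, 2); (4, 1, 3); (4, 1, 5); (4, 1, 7); (4, 1, 9); (4, 1, 10); (4, 2, 6); (4, 2, 7);
  (4, 2, 8); (4, 2, 9); (4, 2, 14); (4, 2, 15); (4, 3, 0); (4, 3, 3); (4, 3, 5); (4, 3, 6);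
  (4, 3, 13); (4, 3, 15); (4, 4, 0); (4, 4, 1); (4, 4, 4); (4, 4, 5); (4, 4, 8); (4, 4, 9);
  (4, 5, 0); (4, 5, 2); (4, 5, 9); (4, 5, 10); (4, 5, 13); (4, 5, 14); (4, 6, 1); (4, 6, 2);
  (4, 6, 5); (4, 6, 7); (4, 6, 13); (4, 6, 15); (4, 7, 4); (4, 7, 7); (4, 7, 8); (4, 7, 10);
  (4, 7, 14); (4, 7, 15); (4, 8, 1); (4, 8, 2); (4, 8, 8); (4, 8, 10); (4, 8, 13);
  (4, 8, 14); (4, 9, 6); (4, 9, 7); (4, 9, 8); (4, 9, 9); (4, 9, 14); (4, 9, 15);
  (4, 10, 2); (4, 10, 3); (4, 10, 4); (4, 10, 7); (4, 10, 13); (4, 10, 15); (4, 11, 1);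
  (4, 11, 3); (4, 11, 4); (4, 11, 6); (4, 11, 9); (4, 11, 10); (4, 12, 5); (4, 12, 6);
  (4, 12, 8); (4, 12, 10); (4, 12, 13); (4, 12, 15); (4, 13, 1); (4, 13, 3); (4, 13, 9);
  (4, 13, 10); (4, 13, 14); (4, 13, 15); (4, 14, 0); (4, 14, 1); (4, 14, 4); (4, 14, 5);
  (4, 14, 8); (4, 14, 9); (4, 15, 0); (4, 15, 3); (4, 15, 4); (4, 15, 6); (4, 15, 13);
  (4, 15, 14)].

Definition arcT4_140 : seq code3 := [::
  (0, 4, 14); (4, 5, 13); (4, 15, 11); (4, 3, 3); (4, 10, 7); (1, 4, 0); (4, 5, 1);
  (4, 12, 15); (4, 3, 7); (4, 11, 10); (1, 4, 1); (4, 5, 0); (4, 12, 12); (4, 3, 4);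
  (4, 11, 11); (1, 4, 2); (4, 5, 3); (4, 12, 14); (4, 3, 6); (4, 11, 8); (1, 4, 3);
  (4, 5, 2); (4, 12, 13); (4, 3, 5); (4, 11, 9); (1, 4, 4); (4, 6, 5); (4, 13, 4);
  (4, 0, 14); (4, 11, 15); (1, 4, 6); (4, 6, 7); (4, 13, 5); (4, 0, 15); (4, 11, 13);
  (1, 4, 5); (4, 6, 4); (4, 13, 7); (4, 0, 13); (4, 11, 14); (1, 4, 7); (4, 6, 6);
  (4, 13, 6); (4, 0, 12); (4, 11, 12); (1, 4, 14); (4, 4, 14); (4, 14, 8); (4, 2, 0);
  (4, 11, 4); (1, 8, 0); (4, 6, 0); (4, 15, 13); (4, 0, 6); (4, 8, 10); (1, 8, 3);
  (4, 6, 1); (4, 15, 14); (4, 0, 5); (4, 8, 11); (1, 8, 1); (4, 6, 2); (4, 15, 12);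
  (4, 0, 7); (4, 8, 8); (1, 8, 2); (4, 6, 3); (4, 15, 15); (4, 0, 4); (4, 8, 9); (1, 8, 5);
  (4, 7, 12); (4, 13, 10); (4, 1, 2); (4, 8, 6); (1, 8, 12); (4, 4, 11); (4, 12, 3);
  (4, 2, 10); (4, 8, 1); (1, 8, 14); (4, 4, 8); (4, 12, 1); (4, 2, 8); (4, 8, 2);
  (1, 8, 13); (4, 4, 9); (4, 12, 2); (4, 2, 11); (4, 8, 3); (1, 8, 15); (4, 4, 10);
  (4, 12, 0); (4, 2, 9); (4, 8, 0); (1, 12, 4); (4, 5, 10); (4, 13, 0); (4, 3, 11);
  (4, 9, 3); (1, 12, 5); (4, 5, 9); (4, 13, 2); (4, 3, 9); (4, 9, 0); (1, 12, 6);
  (4, 5, 11); (4, 13, 3); (4, 3, 8); (4, 9, 2); (1, 12, 7); (4, 5, 8); (4, 13, 1);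
  (4, 3, 10); (4, 9, 1); (1, 12, 11); (4, 6, 15); (4, 12, 9); (4, 0, 1); (4, 9, 5);
  (1, 12, 12); (4, 4, 5); (4, 15, 5); (4, 2, 14); (4, 9, 13); (1, 12, 15); (4, 4, 7);
  (4, 15, 4); (4, 2, 15); (4, 9, 15); (1, 12, 13); (4, 4, 6); (4, 15, 7); (4, 2, 12);
  (4, 9, 14); (1, 12, 14); (4, 4, 4); (4, 15, 6); (4, 2, 13); (4, 9, 12)].

Definition arcT4_152 : seq code3 := [::
  (0, 0, 4); (0, 1, 12); (0, 4, 0); (0, 4, 3); (0, 4, 4); (0, 4, 5); (0, 4, 10); (0, 4, 11);
  (0, 4, 12); (0, 4, 15); (1, 0, 4); (1, 1, 4); (1, 1, 12); (1, 2, 8); (1, 2, 12);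
  (1, 3, 8); (1, 4, 1); (1, 4, 2); (1, 4, 5); (1, 4, 6); (1, 4, 8); (1, 4, 10); (1, 4, 13);
  (1, 4, 15); (1, 8, 0); (1, 8, 2); (1, 8, 4); (1, 8, 7); (1, 8, 8); (1, 8, 9); (1, 8, 12);
  (1, 8, 13); (1, 12, 2); (1, 12, 3); (1, 12, 4); (1, 12, 5); (1, 12, 9); (1, 12, 10);
  (1, 12, 12); (1, 12, 15); (4, 0, 1); (4, 0, 2); (4, 0, 3); (4, 0, 8); (4, 0, 11);
  (4, 0, 12); (4, 0, 14); (4, 0, 15); (4, 1, 0); (4, 1, 2); (4, 1, 4); (4, 1, 7); (4, 1, 8);
  (4, 1, 9); (4, 2, 4); (4, 2, 6); (4, 2, 9); (4, 2, 11); (4, 2, 13); (4, 2, 14); (4, 3, 0);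
  (4, 3, 1); (4, 3, 3); (4, 3, 6); (4, 3, 7); (4, 3, 12); (4, 3, 13); (4, 3, 15); (4, 4, 0);
  (4, 4, 2); (4, 4, 5); (4, 4, 6); (4, 4, 8); (4, 4, 9); (4, 4, 15); (4, 5, 1); (4, 5, 2);
  (4, 5, 3); (4, 5, 9); (4, 5, 10); (4, 5, 12); (4, 5, 14); (4, 6, 0); (4, 6, 1); (4, 6, 3);
  (4, 6, 6); (4, 6, 7); (4, 6, 12); (4, 6, 13); (4, 7, 5); (4, 7, 7); (4, 7, 8); (4, 7, 10);
  (4, 7, 13); (4, 7, 14); (4, 7, 15); (4, 8, 0); (4, 8, 2); (4, 8, 4); (4, 8, 6);
  (4, 8, 12); (4, 8, 13); (4, 8, 15); (4, 9, 0); (4, 9, 1); (4, 9, 3); (4, 9, 4); (4, 9, 5);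
  (4, 9, 8); (4, 9, 10); (4, 10, 1); (4, 10, 2); (4, 10, 3); (4, 10, 10); (4, 10, 11);
  (4, 10, 13); (4, 10, 14); (4, 11, 5); (4, 11, 6); (4, 11, 8); (4, 11, 11); (4, 11, 12);
  (4, 11, 14); (4, 11, 15); (4, 12, 4); (4, 12, 7); (4, 12, 9); (4, 12, 10); (4, 12, 14);
  (4, 12, 15); (4, 13, 1); (4, 13, 2); (4, 13, 3); (4, 13, 10); (4, 13, 11); (4, 13, 12);
  (4, 13, 13); (4, 13, 14); (4, 14, 0); (4, 14, 1); (4, 14, 3); (4, 14, 4); (4, 14, 5);
  (4, 14, 9); (4, 14, 11); (4, 14, 12); (4, 15, 0); (4, 15, 2); (4, 15, 5); (4, 15, 7);
  (4, 15, 13); (4, 15, 15)].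

Lemma arcs_G4 : [/\ has_proj_arc G4 120 8, has_proj_arc G4 140 9 & has_proj_arc G4 152 10].
Proof.
have arc := proj_arc_of_check decG4_uniq card_G4 (residue_dual_forms residue_map_G4).
by split; [apply: (arc arcG4_120) | apply: (arc arcG4_140) | apply: (arc arcG4_152)];
  vm_compute.
Qed.

Lemma arcs_S4 : [/\ has_proj_arc S4 120 8, has_proj_arc S4 140 9 & has_proj_arc S4 152 10].
Proof.
have arc := proj_arc_of_check decS4_uniq card_S4 (residue_dual_forms residue_map_S4).
by split; [apply: (arc arcS4_120) | apply: (arc arcS4_140) | apply: (arc arcS4_152)];
  vm_compute.
Qed.

Lemma arcs_T4 : [/\ has_proj_arc T4 120 8, has_proj_arc T4 140 9 & has_proj_arc T4 152 10].
Proof.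
have arc := proj_arc_of_check decT4_uniq card_T4 dual_forms_T4.
by split; [apply: (arc arcT4_120) | apply: (arc arcT4_140) | apply: (arc arcT4_152)];
  vm_compute.
Qed.

Theorem theorem3p6 :
  [/\ [/\ has_proj_arc G4 120 8, has_proj_arc G4 140 9 & has_proj_arc G4 152 10],
      [/\ has_proj_arc S4 120 8, has_proj_arc S4 140 9 & has_proj_arc S4 152 10]
    & [/\ has_proj_arc T4 120 8, has_proj_arc T4 140 9 & has_proj_arc T4 152 10]].
Proof. by split; [exact: arcs_G4 | exact: arcs_S4 | exact: arcs_T4]. Qed.
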